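(* For every countable two-sorted ultrametric space $X$ there is a uniformly continuous dc-embedding $e\colon X\to\mathbb U$.
   Context: A two-sorted ultrametric space is $(X,d_X,D_X)$ with $D_X$ a linear order with least element $0$, $d_X\colon X\times X\to D_X$ symmetric, $d_X(x,y)=0\iff x=y$, $d_X(x,z)\le\max\{d_X(x,y),d_X(y,z)\}$; countable means both $X$ and $D_X$ are countable. A dc-embedding $f\colon X\to Y$ is an injection on points with an order embedding $D_f\colon D_X\to D_Y$ fixing $0$ such that $d_Y(f(x),f(x'))=D_f(d_X(x,x'))$. The uniformity of $X$ is generated by the partitions $\{B_r(a):a\in X\}$, $B_r(a)=\{x:d(x,a)<r\}$, $r\in D_X\setminus\{0\}$; uniform continuity is with respect to these uniformities. $\mathbb U$ is the countable rational Urysohn ultrametric space (the unique countable ultrametric space with distances in $\mathbb Q_{\ge0}$ that is universal for finite rational ultrametric spaces and in which every isometry between finite subsets extends to a global isometry), viewed as a two-sorted space with distance set $\mathbb Q_{\ge0}$; equivalently the Fraïssé limit of finite two-sorted ultrametric spaces with dc-embeddings. *)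

From HB Require Import structures.
From mathcomp Require Import all_boot all_order all_algebra.
From Stdlib Require List.
Import Order.TTheory GRing.Theory Num.Theory.

Set Implicit Arguments.
Unset Strict Implicit.
Unset Printing Implicit Defensive.

Definition ultrametric {disp : Order.disp_t} {X : Type} {D : orderType disp}
    (z : D) (dX : X -> X -> D) : Prop :=
  [/\ (forall r : D, (z <= r)%O),
      (forall x y, dX x y = dX y x),
      (forall x y, dX x y = z <-> x = y) &
      (forall x y w, (dX x w <= Order.max (dX x y) (dX y w))%O)].

Definition countable (T : Type) : Prop := exists f : T -> nat, injective f.

Definition dc_embedding {dispX dispY : Order.disp_t} {X Y : Type}
    {DX : orderType dispX} {DY : orderType dispY}
    (zX : DX) (dX : X -> X -> DX) (zY : DY) (dY : Y -> Y -> DY) (f : X -> Y) : Prop :=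
  injective f /\
  exists Df : DX -> DY,
    [/\ (forall a b, (Df a <= Df b)%O = (a <= b)%O),
        Df zX = zY &
        (forall x x', dY (f x) (f x') = Df (dX x x'))].

(* Entourages of the uniformity generated by the ball partitions
   {B_r(a) : a in X}, r in D \ {0}.  The entourage of the partition at
   radius r is {(x,y) | d x y < r}; the generated uniformity consists of
   the relations containing a finite intersection of these (the empty
   intersection being X x X). *)
Definition entourage {disp : Order.disp_t} {X : Type} {D : orderType disp}
    (z : D) (dX : X -> X -> D) (R : X -> X -> Prop) : Prop :=
  (forall x y, R x y) \/
  exists r : D, (z < r)%O /\ forall x y, (dX x y < r)%O -> R x y.

Definition uniformly_continuous {dispX dispY : Order.disp_t} {X Y : Type}
    {DX : orderType dispX} {DY : orderType dispY}
    (zX : DX) (dX : X -> X -> DX) (zY : DY) (dY : Y -> Y -> DY) (f : X -> Y) : Prop :=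
  forall R : Y -> Y -> Prop, entourage zY dY R ->
    entourage zX dX (fun x x' => R (f x) (f x')).

Record qnn := QNN { qval : rat; qval_ge0 : (0 <= qval)%R }.
HB.instance Definition _ := [isSub for qval].
HB.instance Definition _ := [Choice of qnn by <:].
HB.instance Definition _ :=
  [SubChoice_isSubOrder of qnn by <: with Order.Disp tt tt].

Definition q0 : qnn := @QNN 0%R (lexx (0%R : rat)).

(* Such a space exists and is unique up to
   isometry. *)
Definition rational_Urysohn (U : Type) (dU : U -> U -> qnn) : Prop :=
  [/\ ultrametric q0 dU,
      countable U,
      (forall (F : finType) (dF : F -> F -> qnn), ultrametric q0 dF ->
         exists g : F -> U, injective g /\ forall a b, dU (g a) (g b) = dF a b) &
      (forall (A : seq U) (h : U -> U),
         (forall a b, List.In a A -> List.In b A -> dU (h a) (h b) = dU a b) ->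
         exists g : U -> U,
           [/\ bijective g,
               (forall a b, dU (g a) (g b) = dU a b) &
               (forall a, List.In a A -> g a = h a)])].

From HB Require Import structures.
From mathcomp Require Import all_boot all_order all_algebra.
From mathcomp Require Import lra.
From Stdlib Require Import Classical ClassicalEpsilon.
Import Order.TTheory GRing.Theory Num.Theory.

Set Implicit Arguments.
Unset Strict Implicit.
Unset Printing Implicit Defensive.

(* Enumerate the countable distance set D and label its elements by
   nonnegative rationals one at a time: the m-th element gets 0 if it is the
   least element, and otherwise the midpoint between the largest earlier label
   below it and the smallest earlier label above it, the latter capped at
   (largest label below) + 1/(m+1).  This is an order embedding fixing 0,
   and it is continuous at 0: if 0 is not isolated, elements of arbitrarily
   large index m have no earlier element between 0 and themselves, so their
   labels are at most 1/(m+1).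
   Composing d_X with the labelling turns X into a countable ultrametric space
   with rational distances, which embeds isometrically into U point by point:
   universality embeds the finite part built so far together with the next
   point, and homogeneity moves this copy onto the part already placed. *)

Lemma exists_partial_inverse (A B : Type) (a0 : A) (f : A -> B) :
  injective f -> exists g : B -> A, cancel f g /\ forall b, g b = a0 \/ f (g b) = b.
Proof.
move=> f_inj.
have [g gP] : exists g : B -> A,
    forall b, f (g b) = b \/ (~ (exists a, f a = b) /\ g b = a0).
  apply: (choice (fun b a => f a = b \/ (~ (exists a, f a = b) /\ a = a0))) => b.
  case: (classic (exists a, f a = b)) => [[a fa]|nfb]; first by exists a; left.
  by exists a0; right.
exists g; split=> [a|b]; last by case: (gP b) => [|[]]; auto.
by case: (gP (f a)) => [/f_inj // | [[]]]; exists a.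
Qed.

Lemma nat_chain (A : Type) (P : nat -> A -> Prop) (R : nat -> A -> A -> Prop) (a0 : A) :
  P 0 a0 -> (forall n a, P n a -> exists2 a', P n.+1 a' & R n a a') ->
  exists s : nat -> A, forall n, P n (s n) /\ R n (s n) (s n.+1).
Proof.
move=> P0 P_step.
have [next nextP] : exists next : nat * A -> A,
    forall na, P na.1 na.2 -> P na.1.+1 (next na) /\ R na.1 na.2 (next na).
  apply: (choice (fun (na : nat * A) a' =>
    P na.1 na.2 -> P na.1.+1 a' /\ R na.1 na.2 a')) => -[n a].
  case: (classic (P n a)) => [/P_step[a' ? ?]|nPa]; first by exists a'.
  by exists a.
pose s := fix s n := if n is m.+1 then next (m, s m) else a0.
have Ps n : P n (s n) by elim: n => //= n /(nextP (n, _)) [].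
by exists s => n; split; [exact: Ps | exact: (nextP (n, s n) (Ps n)).2].
Qed.

Lemma ltnS_eqVlt k n : (k < n.+1)%N -> k = n \/ (k < n)%N.
Proof. by rewrite ltnS leq_eqVlt => /predU1P. Qed.

Lemma mem_In (T : eqType) (s : seq T) (x : T) : x \in s -> List.In x s.
Proof. by elim: s => //= y s IH; rewrite in_cons => /orP[/eqP->|/IH]; [left|right]. Qed.

Lemma q0_le (r : qnn) : (q0 <= r)%O.
Proof. exact: qval_ge0. Qed.

Section UrysohnEmbedding.

Variables (U : Type) (dU : U -> U -> qnn).
Hypothesis U_Urysohn : rational_Urysohn dU.

Lemma urysohn_extend (F : finType) (dF : F -> F -> qnn) (P : pred F) (E : F -> U) :
  ultrametric q0 dF -> {in P &, forall a b, dU (E a) (E b) = dF a b} ->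
  exists2 E' : F -> U, (forall a b, dU (E' a) (E' b) = dF a b) & {in P, E' =1 E}.
Proof.
case: U_Urysohn => _ _ universal homogeneous F_ultra E_iso.
have [g [g_inj g_iso]] := universal F dF F_ultra.
case: (pickP [pred a : F | true]) => [a0 _|F_empty]; last by exists E => [a|a]; have := F_empty a.
have [ginv [gK _]] := exists_partial_inverse a0 g_inj.
pose A := List.map g (List.filter P (enum F)).
have A_g b : List.In b A -> exists2 a, P a & b = g a.
  by case/List.in_map_iff => a [<- /List.filter_In[_ Pa]]; exists a.
have [|G [_ G_iso GA]] := homogeneous A (E \o ginv).
  move=> _ _ /A_g[a Pa ->] /A_g[b Pb ->].
  by rewrite /= !gK E_iso ?g_iso.
exists (G \o g) => [a b|a Pa]; first by rewrite /= G_iso g_iso.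
rewrite /= GA /= ?gK //; apply: List.in_map; apply/List.filter_In.
by split; first exact/mem_In/mem_enum.
Qed.

Lemma urysohn_inhabited : inhabited U.
Proof.
case: U_Urysohn => _ _ universal _.
have [|g _] := universal unit (fun _ _ => q0); last exact: inhabits (g tt).
by split=> // [|[] []]; [exact: q0_le|].
Qed.

Section PrefixExtension.

Variables (X : Type) (del : X -> X -> qnn) (f : X -> nat) (p : nat -> X).
Hypotheses (del_ultra : ultrametric q0 del) (fK : cancel f p).

Definition iso_below (n : nat) (E : X -> U) : Prop :=
  forall x y, (f x < n)%N -> (f y < n)%N -> dU (E x) (E y) = del x y.

Definition agree_below (n : nat) (E E' : X -> U) : Prop :=
  forall x, (f x < n)%N -> E' x = E x.

Lemma iso_below_extend n E :
  iso_below n E -> exists2 E', iso_below n.+1 E' & agree_below n E E'.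
Proof.
move=> E_iso; case: del_ultra => _ del_sym del_sep del_tri.
pose F := {i : 'I_n.+1 | f (p i) == i}.
pose pt (a : F) := p (val a).
have f_pt (a : F) : f (pt a) = val a := eqP (valP a).
have F_ultra : ultrametric q0 (fun a b : F => del (pt a) (pt b)).
  split=> [r|a b|a b|a b w]; [exact: q0_le|exact: del_sym| |exact: del_tri].
  split=> [/del_sep pab|->]; last exact/del_sep.
  by apply/val_inj/val_inj/eqP; rewrite /= -f_pt -(f_pt b) pab.
have [|EF EF_iso EF_E] :=
    urysohn_extend (P := fun a : F => (val a < n)%N) (E := E \o pt) F_ultra.
  by move=> a b an bn; apply: E_iso; rewrite f_pt.
have pt_code x (fx : (f x < n.+1)%N) : exists a : F, val a = f x :> nat.
  have code : f (p (Ordinal fx)) == Ordinal fx by rewrite /= fK.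
  by exists (exist _ (Ordinal fx) code).
pose E' x := if [pick a : F | val a == f x :> nat] is Some a then EF a else E x.
have E'_pt x (a : F) : val a = f x :> nat -> E' x = EF a.
  move=> ax; rewrite /E'; case: pickP => [b /eqP bx|/(_ a)]; last by rewrite ax eqxx.
  by congr EF; apply/val_inj/val_inj; rewrite /= bx ax.
exists E' => [x y fx fy|x fx].
  have [[a ax] [b bx]] := (pt_code x fx, pt_code y fy).
  rewrite (E'_pt x a ax) (E'_pt y b bx) EF_iso /pt.
  by rewrite -(fK x) -(fK y) -ax -bx.
have [a ax] := pt_code x (ltnW fx).
by rewrite (E'_pt x a ax) EF_E /= /pt ?ax ?fK // unfold_in /= ax.
Qed.

End PrefixExtension.

Lemma countable_isometric_embedding (X : Type) (del : X -> X -> qnn) :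
  ultrametric q0 del -> countable X ->
  exists e : X -> U, forall x y, dU (e x) (e y) = del x y.
Proof.
move=> del_ultra [f f_inj].
case: (classic (inhabited X)) => [[x0]|X_empty]; last first.
  by exists (fun x => False_rect U (X_empty (inhabits x))) => x.
have [u0] := urysohn_inhabited.
have [p [fK _]] := exists_partial_inverse x0 f_inj.
have [|s sP] := nat_chain (P := iso_below del f) (R := agree_below f) (a0 := fun=> u0) _
  (iso_below_extend del_ultra fK); first by [].
have s_stable n m : (n <= m)%N -> agree_below f n (s n) (s m).
  elim: m => [|m IH]; first by rewrite leqn0 => /eqP-> x.
  rewrite leq_eqVlt ltnS => /predU1P[-> //|nm] x fx.
  by rewrite (sP m).2 ?IH // (leq_trans fx).
exists (fun x => s (f x).+1 x) => x y.
have [fx fy] : (f x < (maxn (f x) (f y)).+1 /\ f y < (maxn (f x) (f y)).+1)%N.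
  by rewrite !ltnS leq_maxl leq_maxr.
rewrite -(s_stable _ _ fx) // -(s_stable _ _ fy) //.
exact: (sP _).1.
Qed.

End UrysohnEmbedding.

Local Open Scope ring_scope.

Definition max_seq (s : seq rat) : rat := foldr Num.max 0 s.
Definition min_seq (a : rat) (s : seq rat) : rat := foldr Num.min a s.

Lemma max_seq_ge0 s : 0 <= max_seq s.
Proof. by elim: s => //= x s IH; rewrite le_max IH orbT. Qed.

Lemma max_seq_ub s x : x \in s -> x <= max_seq s.
Proof.
elim: s => //= y s IH; rewrite in_cons le_max => /predU1P[->|/IH->]; last exact: orbT.
by rewrite lexx.
Qed.

Lemma max_seq_le s b : 0 <= b -> {in s, forall x, x <= b} -> max_seq s <= b.
Proof.
move=> b_ge0; elim: s => //= y s IH s_le.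
by rewrite ge_max s_le ?mem_head // IH // => x xs; rewrite s_le // in_cons xs orbT.
Qed.

Lemma max_seq_lt s b : 0 < b -> {in s, forall x, x < b} -> max_seq s < b.
Proof.
move=> b_gt0; elim: s => //= y s IH s_lt.
by rewrite gt_max s_lt ?mem_head // IH // => x xs; rewrite s_lt // in_cons xs orbT.
Qed.

Lemma min_seq_le_default a s : min_seq a s <= a.
Proof. by elim: s => [|y s IH] /=; rewrite ?lexx // ge_min IH orbT. Qed.

Lemma min_seq_lb a s x : x \in s -> min_seq a s <= x.
Proof.
elim: s => //= y s IH; rewrite in_cons ge_min => /predU1P[->|/IH->]; last exact: orbT.
by rewrite lexx.
Qed.

Lemma min_seq_gt a s b : b < a -> {in s, forall x, b < x} -> b < min_seq a s.
Proof.
move=> ba; elim: s => //= y s IH s_gt.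
by rewrite lt_min s_gt ?mem_head // IH // => x xs; rewrite s_gt // in_cons xs orbT.
Qed.

Lemma exists_inv_nat_lt (r : rat) : 0 < r -> exists N : nat, N.+1%:R^-1 < r.
Proof.
move=> r_gt0; exists (Num.Def.archi_bound r^-1).
rewrite -[r in _ < r]invrK ltf_pV2 ?posrE ?invr_gt0 ?ltr0Sn //.
apply: lt_le_trans (archi_boundP _) _; first by rewrite invr_ge0 ltW.
by rewrite ler_nat.
Qed.

Lemma mem_filter_iota (v : nat -> rat) (P : pred nat) m x :
  x \in [seq v j | j <- iota 0 m & P j] <-> exists2 j, (j < m)%N && P j & x = v j.
Proof.
split=> [/mapP[j]|[j /andP[jm Pj] ->]]; last by rewrite map_f // mem_filter Pj mem_iota.
by rewrite mem_filter mem_iota andbC => /andP[/andP[_ jm] Pj] ->; exists j; rewrite ?jm.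
Qed.

Section RationalLabels.

Variables (disp : Order.disp_t) (D : orderType disp) (z : D) (p : nat -> D).
Hypothesis z_min : forall a : D, (z <= a)%O.

Definition below (m : nat) (v : nat -> rat) : seq rat :=
  [seq v j | j <- iota 0 m & (p j < p m)%O].
Definition above (m : nat) (v : nat -> rat) : seq rat :=
  [seq v j | j <- iota 0 m & (p m < p j)%O].

Definition next_label (m : nat) (v : nat -> rat) : rat :=
  if p m == z then 0 else
  let lo := max_seq (below m v) in (lo + min_seq (lo + m.+1%:R^-1) (above m v)) / 2.

Fixpoint labels (n : nat) : seq rat :=
  if n is m.+1 then rcons (labels m) (next_label m (nth 0 (labels m))) else [::].

Definition label (k : nat) : rat := nth 0 (labels k.+1) k.

Lemma size_labels n : size (labels n) = n.
Proof. by elim: n => //= n IH; rewrite size_rcons IH. Qed.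

Lemma nth_labels n k : (k < n)%N -> nth 0 (labels n) k = label k.
Proof.
elim: n => // n IH /ltnS_eqVlt[-> //|kn].
by rewrite /= nth_rcons size_labels kn IH.
Qed.

Lemma label_rec m : label m = next_label m label.
Proof.
have eq_prefix (P : pred nat) : [seq nth 0 (labels m) j | j <- iota 0 m & P j] =
                              [seq label j | j <- iota 0 m & P j].
  by apply/eq_in_map => j; rewrite mem_filter mem_iota => /and3P[_ _ /nth_labels].
by rewrite /label /= nth_rcons size_labels ltnn eqxx /next_label /below /above !eq_prefix.
Qed.

Lemma label_z k : p k = z -> label k = 0.
Proof. by move=> pkz; rewrite label_rec /next_label pkz eqxx. Qed.

Lemma label_between m : p m != z ->
  (forall i j, (i < m)%N -> (j < m)%N -> (p i < p j)%O -> label i < label j) ->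
  (forall j, (j < m)%N -> (z < p j)%O -> 0 < label j) ->
  [/\ 0 < label m,
      forall i, (i < m)%N -> (p i < p m)%O -> label i < label m &
      forall j, (j < m)%N -> (p m < p j)%O -> label m < label j].
Proof.
move=> pmz mono pos.
have := label_rec m; rewrite /next_label (negPf pmz).
set lo := max_seq _; set hi := min_seq _ _ => label_m.
have lo_ge0 : 0 <= lo := max_seq_ge0 _.
have lo_lt_hi : lo < hi.
  apply: min_seq_gt => [|_ /mem_filter_iota[j /andP[jm pmj] ->]]; first by rewrite ltrDl invr_gt0.
  apply: max_seq_lt => [|_ /mem_filter_iota[i /andP[im pim] ->]].
    by apply: pos jm _; apply: le_lt_trans pmj.
  exact: mono im jm (lt_trans pim pmj).
have [lo_lt hi_gt] : lo < label m /\ label m < hi by rewrite label_m; split; lra.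
split=> [|i im pim|j jm pmj]; first exact: le_lt_trans lo_lt.
  by apply: le_lt_trans lo_lt; apply/max_seq_ub/mem_filter_iota; exists i; rewrite ?im.
by apply: lt_le_trans hi_gt _; apply/min_seq_lb/mem_filter_iota; exists j; rewrite ?jm.
Qed.

Lemma label_mono_below m :
  (forall i j, (i < m)%N -> (j < m)%N -> (p i < p j)%O -> label i < label j) /\
  (forall j, (j < m)%N -> (z < p j)%O -> 0 < label j).
Proof.
elim: m => [|m [mono pos]]; first by [].
have [pmz|pmz] := eqVneq (p m) z.
  have label_m : label m = 0 := label_z pmz.
  split=> [i j|j].
  - move=> /ltnS_eqVlt[->|im] /ltnS_eqVlt[->|jm]; rewrite ?ltxx ?pmz //.
    + by rewrite label_m; apply: pos.
    + by rewrite ltNge z_min.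
    + exact: mono.
  - by move=> /ltnS_eqVlt[->|jm]; rewrite ?pmz ?ltxx //; apply: pos.
have [pos_m lt_m gt_m] := label_between pmz mono pos.
split=> [i j|j].
- move=> /ltnS_eqVlt[->|im] /ltnS_eqVlt[->|jm]; rewrite ?ltxx //.
  + exact: gt_m.
  + exact: lt_m.
  + exact: mono.
- by move=> /ltnS_eqVlt[->|jm] //; apply: pos.
Qed.

Lemma label_lt i j : (p i < p j)%O -> label i < label j.
Proof. by apply: (label_mono_below (maxn i j).+1).1; rewrite ltnS ?leq_maxl ?leq_maxr. Qed.

Lemma label_ge0 k : 0 <= label k.
Proof.
have [/label_z->//|pkz] := eqVneq (p k) z.
by apply/ltW/(label_mono_below k.+1).2; rewrite // lt_neqAle eq_sym pkz z_min.
Qed.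

Lemma label_le_inv m : (forall j, (j < m)%N -> (p j < p m)%O -> p j = z) ->
  label m <= m.+1%:R^-1.
Proof.
move=> below_z; rewrite label_rec /next_label; case: ifP => _; first by rewrite invr_ge0.
have lo_0 : max_seq (below m label) = 0.
  apply/le_anti; rewrite max_seq_ge0 andbT; apply: max_seq_le => // x.
  by case/mem_filter_iota=> j /andP[jm pjm] ->; rewrite label_z // below_z.
rewrite lo_0 !add0r; set eps := _^-1.
have hi_le := min_seq_le_default eps (above m label).
have eps_ge0 : 0 <= eps by rewrite invr_ge0.
lra.
Qed.

End RationalLabels.

Definition continuous_at_zero {dispX dispY : Order.disp_t}
    {DX : orderType dispX} {DY : orderType dispY} (zX : DX) (zY : DY) (Df : DX -> DY) :=
  forall r, (zY < r)%O ->
    (forall a, (Df a < r)%O) \/ exists2 s, (zX < s)%O & forall a, (a < s)%O -> (Df a < r)%O.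

Section RationalEmbedding.

Variables (disp : Order.disp_t) (D : orderType disp) (z : D).
Variables (c : D -> nat) (p : nat -> D).
Hypotheses (z_min : forall a : D, (z <= a)%O) (cK : cancel c p).
(* Indices coding no element are sent to [z]; hence an index carrying an
   element other than [z] is the code of that element. *)
Hypothesis p_code : forall j, p j = z \/ c (p j) = j.

Definition rat_embed (d : D) : rat := label z p (c d).

Lemma rat_embed_lt a b : (a < b)%O -> rat_embed a < rat_embed b.
Proof. by move=> ab; apply: (label_lt z_min); rewrite !cK. Qed.

Lemma rat_embed_z : rat_embed z = 0.
Proof. by apply: label_z; rewrite cK. Qed.

Lemma rat_embed_ge0 d : 0 <= rat_embed d.
Proof. exact: label_ge0. Qed.

Lemma exists_gap (s0 : D) : (z < s0)%O ->
  forall N, exists2 a, (z < a)%O & forall j, (j < N)%N -> ~~ (z < p j < a)%O.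
Proof.
move=> zs0; elim=> [|N [a za gap]]; first by exists s0.
have [/andP[zpN pNa]|pN_out] := boolP (z < p N < a)%O.
  exists (p N) => // j /ltnS_eqVlt[->|/gap]; first by rewrite ltxx andbF.
  by apply: contra => /andP[-> /lt_trans->].
by exists a => // j /ltnS_eqVlt[->|/gap].
Qed.

Lemma rat_embed_continuous : continuous_at_zero z 0 rat_embed.
Proof.
move=> r r_gt0.
have small_z a : ~ (z < a)%O -> rat_embed a < r.
  move=> za; suff -> : a = z by rewrite rat_embed_z.
  by apply/le_anti; rewrite z_min andbT leNgt; apply/negP.
have [[s0 zs0]|no_pos] := classic (exists s0, (z < s0)%O); last first.
  by left=> a; apply: small_z => za; apply: no_pos; exists a.
have [N N_r] := exists_inv_nat_lt r_gt0.
have [a za gap] := exists_gap zs0 N.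
right; have [[b zba]|empty] := classic (exists b, (z < b < a)%O); last first.
  by exists a => // b ba; apply: small_z => zb; apply: empty; exists b; rewrite zb.
have ex_m : exists m, (z < p m < a)%O by exists (c b); rewrite cK.
case: (@ex_minnP (fun m => (z < p m < a)%O) ex_m) => m /andP[zm ma] m_min.
have cm : c (p m) = m by case: (p_code m) => // pmz; move: zm; rewrite pmz ltxx.
exists (p m) => // b' b'm; apply: lt_le_trans (rat_embed_lt b'm) _.
have m_ge_N : (N <= m)%N by rewrite leqNgt; apply/negP => /gap; rewrite zm ma.
have label_m : label z p m <= m.+1%:R^-1.
  apply: label_le_inv => j jm pjm; apply/le_anti; rewrite z_min andbT leNgt.
  by apply/negP => zj; have := m_min j; rewrite zj (lt_trans pjm ma) leqNgt jm => /(_ isT).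
rewrite /rat_embed cm; apply/ltW/le_lt_trans/N_r/(le_trans label_m).
by rewrite lef_pV2 ?posrE ?ltr0Sn // ler_nat ltnS.
Qed.

End RationalEmbedding.

Local Close Scope ring_scope.

Section DistanceMaps.

Variables (dispX dispY : Order.disp_t) (DX : orderType dispX) (DY : orderType dispY).
Variables (zX : DX) (zY : DY) (Df : DX -> DY).
Hypotheses (Df_mono : {mono Df : a b / (a <= b)%O}) (Df_z : Df zX = zY).

Lemma ultrametric_comp (X : Type) (dX : X -> X -> DX) :
  (forall r, (zY <= r)%O) -> ultrametric zX dX -> ultrametric zY (fun x y => Df (dX x y)).
Proof.
move=> zY_min [_ d_sym d_sep d_tri]; split=> // [x y|x y|x y w].
- by rewrite d_sym.
- by rewrite -Df_z; split=> [/(inc_inj Df_mono)/d_sep|/d_sep->].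
- by rewrite le_max !Df_mono -le_max.
Qed.

Variables (X Y : Type) (dX : X -> X -> DX) (dY : Y -> Y -> DY) (e : X -> Y).
Hypothesis e_dist : forall x x', dY (e x) (e x') = Df (dX x x').

Lemma dc_embedding_of_dist : ultrametric zX dX -> ultrametric zY dY ->
  dc_embedding zX dX zY dY e.
Proof.
move=> [_ _ dX_sep _] [_ _ dY_sep _]; split; last by exists Df.
move=> x x' ex; apply/dX_sep/(inc_inj Df_mono).
by rewrite -e_dist Df_z ex; apply/dY_sep.
Qed.

Lemma uniformly_continuous_of_dist : continuous_at_zero zX zY Df ->
  uniformly_continuous zX dX zY dY e.
Proof.
move=> Df_cont R [R_all|[r [zr R_r]]]; first by left.
have [Df_r|[s zs Df_r]] := Df_cont r zr.
  by left=> x x'; apply: R_r; rewrite e_dist.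
by right; exists s; split=> // x x' /Df_r; rewrite -e_dist; apply: R_r.
Qed.

End DistanceMaps.

Theorem proposition3p21 (U : Type) (dU : U -> U -> qnn) :
  rational_Urysohn dU ->
  forall (disp : Order.disp_t) (X : Type) (D : orderType disp)
         (z : D) (dX : X -> X -> D),
    ultrametric z dX -> countable X -> countable D ->
    exists e : X -> U,
      dc_embedding z dX q0 dU e /\ uniformly_continuous z dX q0 dU e.
Proof.
move=> U_Urysohn disp X D z dX dX_ultra X_countable [c c_inj].
have z_min : forall a : D, (z <= a)%O by case: dX_ultra.
have [p [cK p_code]] := exists_partial_inverse z c_inj.
pose Df d := QNN (rat_embed_ge0 c p z_min d).
have Df_mono : {mono Df : a b / (a <= b)%O}.
  by apply: le_mono => a b /(rat_embed_lt z_min cK).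
have Df_z : Df z = q0 by apply: val_inj; exact: rat_embed_z.
have del_ultra := ultrametric_comp Df_mono Df_z q0_le dX_ultra.
have [e e_dist] := countable_isometric_embedding U_Urysohn del_ultra X_countable.
have [U_ultra _ _ _] := U_Urysohn.
exists e; split; first exact: dc_embedding_of_dist e_dist dX_ultra U_ultra.
apply: uniformly_continuous_of_dist e_dist _ => r r_gt0.
exact: (rat_embed_continuous z_min cK p_code r_gt0).
Qed.
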